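(* Let $\mathcal{C}$ be a hypergraph and $F$ an edge of $\mathcal{C}$. Then there is a long exact sequence of reduced homology groups (integer coefficients) $$\cdots\to \tilde H_{i-|F|+1}(\operatorname{Ind}(\mathcal{C}:F))\to \tilde H_i(\operatorname{Ind}(\mathcal{C}))\to \tilde H_i(\operatorname{Ind}(\mathcal{C}-F))\to \tilde H_{i-|F|}(\operatorname{Ind}(\mathcal{C}:F))\to\cdots$$
   Context: A hypergraph $\mathcal{C}$ on a finite vertex set $V$ is a family of pairwise incomparable subsets of $V$ (its edges), each of cardinality at least $2$. The independence complex $\operatorname{Ind}(\mathcal{C})$ is the simplicial complex on $V$ whose faces are the subsets of $V$ containing no edge of $\mathcal{C}$. For an edge $F$: $\mathcal{C}-F$ is the hypergraph on $V$ with edge set $\mathcal{C}\setminus\{F\}$; $N_{\mathcal{C}}(F)=\bigcup\{E\setminus F : E\in\mathcal{C},\ |E\setminus F|=1\}$; and $\mathcal{C}:F$ is the hypergraph on $V\setminus(F\cup N_{\mathcal{C}}(F))$ whose edges are the members of cardinality at least $2$ among the inclusion-minimal members of the family $\{E\setminus F : E\in \mathcal{C}-F\}$ (equivalently, $\operatorname{Ind}(\mathcal{C}:F)$ is the link of $F$ in $\operatorname{Ind}(\mathcal{C}-F)$). *)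

From HB Require Import structures.
From mathcomp Require Import all_boot all_order all_algebra.
Set Implicit Arguments. Unset Strict Implicit. Unset Printing Implicit Defensive.
Import Order.TTheory GRing.Theory Num.Theory.
Local Open Scope ring_scope.

Section Defs.
Variable V : finType.

Definition is_hypergraph (C : {set {set V}}) : Prop :=
  (forall E, E \in C -> (2 <= #|E|)%N) /\
  (forall E1 E2, E1 \in C -> E2 \in C -> E1 \subset E2 -> E1 = E2).

Definition Ind (W : {set V}) (C : {set {set V}}) : {set {set V}} :=
  [set S : {set V} | (S \subset W) && [forall E in C, ~~ (E \subset S)]].

Definition hdel (C : {set {set V}}) (F : {set V}) : {set {set V}} := C :\ F.

Definition hnbhd (C : {set {set V}}) (F : {set V}) : {set V} :=
  \bigcup_(E in C | #|E :\: F| == 1%N) (E :\: F).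

Definition hcolon_vertices (C : {set {set V}}) (F : {set V}) : {set V} :=
  ~: (F :|: hnbhd C F).

Definition hcolon (C : {set {set V}}) (F : {set V}) : {set {set V}} :=
  let Fam := [set E :\: F | E in hdel C F] in
  [set D in Fam | (2 <= #|D|)%N &&
                  [forall D' in Fam, (D' \subset D) ==> (D' == D)]].

Definition chainT := {ffun {set V} -> int}.

(* c is a reduced i-chain of the complex K (faces of cardinality i+1;
   degree -1 is spanned by the empty face). *)
Definition is_chain (K : {set {set V}}) (i : int) (c : chainT) : Prop :=
  forall s, c s != 0 -> s \in K /\ (#|s|%:Z = i + 1).

Definition bdry (c : chainT) : chainT :=
  [ffun s => \sum_(v in ~: s)
      (-1) ^+ #|[set u in s | (enum_rank u < enum_rank v)%N]| * c (v |: s)].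

Definition is_cycle (K : {set {set V}}) (i : int) (z : chainT) : Prop :=
  is_chain K i z /\ bdry z = 0.

Definition is_boundary (K : {set {set V}}) (i : int) (b : chainT) : Prop :=
  exists d, is_chain K (i + 1) d /\ b = bdry d.

(* f : chainT -> chainT represents a homomorphism
   H~_i(K) -> H~_j(L) (additive, cycles to cycles, boundaries to boundaries).
   Every homomorphism between these homology groups arises this way. *)
Definition hmap (K : {set {set V}}) (i : int) (L : {set {set V}}) (j : int)
  (f : chainT -> chainT) : Prop :=
  [/\ forall x y, f (x - y) = f x - f y,
      forall z, is_cycle K i z -> is_cycle L j (f z) &
      forall b, is_boundary K i b -> is_boundary L j (f b)].

(* exactness of H~_i(K) --f--> H~_j(L) --g--> H~_k(M) at H~_j(L):
   ker g = im f on homology classes. *)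
Definition exact_at (K : {set {set V}}) (i : int) (f : chainT -> chainT)
  (L : {set {set V}}) (j : int) (g : chainT -> chainT)
  (M : {set {set V}}) (k : int) : Prop :=
  forall z, is_cycle L j z ->
    (is_boundary M k (g z) <->
     exists x, is_cycle K i x /\ is_boundary L j (f x - z)).

End Defs.

From HB Require Import structures.
From mathcomp Require Import all_boot all_order all_algebra.
From mathcomp Require Import zify ring.
Set Implicit Arguments. Unset Strict Implicit. Unset Printing Implicit Defensive.
Import Order.TTheory GRing.Theory Num.Theory.
Local Open Scope ring_scope.

(* Ind(C) consists of the faces of Ind(C - F) that do not contain F, and
   t |-> t :|: F identifies the faces of Ind(C : F) with the faces of
   Ind(C - F) that contain F.  Hence, up to the sign of the shuffle bringing
   F to the front, the relative chain complex of the pair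
   (Ind(C - F), Ind(C)) is the chain complex of Ind(C : F) shifted by |F|,
   and the sequence is the long exact sequence of that pair: inclusion,
   removal of F, and the connecting map z |-> bdry (z joined with F). *)

Section Chains.
Variable V : finType.
Implicit Types (s t : {set V}) (c d : chainT V).

Definition vlt (u v : V) : bool := (enum_rank u < enum_rank v)%N.
Definition face_sign s v : int := (-1) ^+ #|[set u in s | vlt u v]|.

Lemma bdryE c s : bdry c s = \sum_(v in ~: s) face_sign s v * c (v |: s).
Proof. by rewrite ffunE. Qed.

Lemma bdry_is_zmod_morphism : zmod_morphism (@bdry V).
Proof.
move=> c d; apply/ffunP => s; rewrite !ffunE -sumrB.
by apply: eq_bigr => v _; rewrite !ffunE mulrBr.
Qed.

HB.instance Definition _ :=
  GRing.isZmodMorphism.Build (chainT V) (chainT V) (@bdry V) bdry_is_zmod_morphism.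

Lemma face_signU1 s v w : v \notin s ->
  face_sign (v |: s) w = (-1) ^+ vlt v w * face_sign s w.
Proof.
move=> vs; rewrite /face_sign; case: (boolP (vlt v w)) => vw.
  rewrite (_ : [set u in v |: s | vlt u w] = v |: [set u in s | vlt u w]).
    by rewrite cardsU1 inE (negbTE vs) exprD.
  by apply/setP => x; rewrite !inE; case: eqP => [->|].
rewrite (_ : [set u in v |: s | vlt u w] = [set u in s | vlt u w]) ?mul1r //.
by apply/setP => x; rewrite !inE; case: eqP => [->|]; rewrite ?(negbTE vw) ?(negbTE vs).
Qed.

Lemma sign_vlt_anti (v w : V) : v != w ->
  (-1) ^+ vlt v w = - (-1) ^+ vlt w v :> int.
Proof.
move=> nvw; rewrite /vlt; case: ltngtP => // /val_inj/enum_rank_inj evw.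
by rewrite evw eqxx in nvw.
Qed.

Lemma bdryK c : bdry (bdry c) = 0.
Proof.
apply/ffunP => s; rewrite bdryE [RHS]ffunE.
pose g v w := if w != v then
  face_sign s v * face_sign (v |: s) w * c (w |: (v |: s)) else 0.
(* the double sum is antisymmetric under exchanging the two removed vertices *)
have g_anti v w : v \in ~: s -> w \in ~: s -> g v w = - g w v.
  rewrite !inE /g [v == w]eq_sym => vs ws.
  case: eqP => [_|/eqP nwv]; first by rewrite oppr0.
  rewrite (face_signU1 _ vs) (face_signU1 _ ws) setUCA (@sign_vlt_anti v w) 1?eq_sym //.
  rewrite /=; ring.
set S := LHS; have -> : S = \sum_(v in ~: s) \sum_(w in ~: s) g v w.
  apply: eq_bigr => v vs; rewrite bdryE big_distrr /= [RHS](bigD1 v) //= {1}/g eqxx add0r.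
  apply: eq_big => [w|w]; first by rewrite !inE negb_or andbC.
  by rewrite !inE negb_or => /andP[nwv _]; rewrite /g nwv mulrA.
set T := \sum_(v in ~: s) _; have : T = - T.
  rewrite {1}/T exchange_big /= -sumrN; apply: eq_bigr => w ws.
  by rewrite -sumrN; apply: eq_bigr => v vs; apply: g_anti.
lia.
Qed.

Lemma cardsU_disjoint (A B : {set V}) :
  [disjoint A & B] -> #|A :|: B| = (#|A| + #|B|)%N.
Proof. by move=> AB; apply/eqP; rewrite (leq_card_setU A B).2. Qed.

Lemma subDset_sub (A B D : {set V}) :
  B \subset D -> (A :\: B \subset D) = (A \subset D).
Proof. by move=> BD; rewrite subDset (setUidPr BD). Qed.

Lemma setUKD_disjoint (A B : {set V}) : [disjoint A & B] -> (A :|: B) :\: B = A.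
Proof. by move=> AB; rewrite setDUl setDv setU0; apply/setDidPl. Qed.

Lemma setDUK_subset (A B : {set V}) : B \subset A -> A :\: B :|: B = A.
Proof. by move=> BA; rewrite setUC -[RHS](setID A B) (setIidPr BA). Qed.

Lemma disjoint_setDl (A B : {set V}) : [disjoint A :\: B & B].
Proof. by rewrite -setI_eq0 setIDAC setDIl setDv setI0. Qed.

Definition down_closed (K : {set {set V}}) : Prop :=
  forall s t, t \in K -> s \subset t -> s \in K.

Section ChainsOf.
Variable K : {set {set V}}.
Implicit Types i j : int.

Lemma chain0 i : is_chain K i 0.
Proof. by move=> s; rewrite ffunE eqxx. Qed.

Lemma chainB i c d : is_chain K i c -> is_chain K i d -> is_chain K i (c - d).
Proof.
move=> hc hd s; rewrite ffunE; case: (eqVneq (c s) 0) => [->|/hc //].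
by rewrite add0r ffunE oppr_eq0; apply: hd.
Qed.

Lemma chainN i c : is_chain K i c -> is_chain K i (- c).
Proof. by move=> hc; rewrite -sub0r; apply: chainB => //; apply: chain0. Qed.

Lemma chain_sub (L : {set {set V}}) i c :
  {subset K <= L} -> is_chain K i c -> is_chain L i c.
Proof. by move=> KL hc s /hc[/KL]. Qed.

Lemma bdry_chain i j c : j = i - 1 -> down_closed K ->
  is_chain K i c -> is_chain K j (bdry c).
Proof.
move=> -> Kdown hc s; rewrite bdryE => /eqP.
have [v /andP[vs cv]|c0] := pickP [pred v | (v \in ~: s) && (c (v |: s) != 0)].
  have [vsK cardv] := hc _ cv; split; first by apply: (Kdown _ _ vsK); apply: subsetUr.
  by move: cardv; rewrite inE in vs; rewrite cardsU1 vs; lia.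
rewrite big1 // => v vs; move/negbT: (c0 v); rewrite /= vs negbK => /eqP ->.
by rewrite mulr0.
Qed.

End ChainsOf.

Section JoinF.
Variable F : {set V}.
Implicit Types z : chainT V.

(* The sign of the shuffle moving F in front of s :\: F; it is what makes
   [unjoinF] commute with the boundary. *)
Definition shuffle_sign s : int :=
  (-1) ^+ (\sum_(w in s :\: F) #|[set u in F | vlt u w]|).

Definition joinF z : chainT V :=
  [ffun s : {set V} => if F \subset s then shuffle_sign s * z (s :\: F) else 0].

Definition unjoinF c : chainT V :=
  [ffun t : {set V} =>
    if [disjoint t & F] then shuffle_sign (t :|: F) * c (t :|: F) else 0].

Definition restrF c : chainT V := [ffun s : {set V} => if F \subset s then 0 else c s].

Lemma joinF_is_zmod_morphism : zmod_morphism joinF.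
Proof.
by move=> c d; apply/ffunP => s; rewrite !ffunE; case: ifP; rewrite ?subr0 // mulrBr.
Qed.
HB.instance Definition _ :=
  GRing.isZmodMorphism.Build (chainT V) (chainT V) joinF joinF_is_zmod_morphism.

Lemma unjoinF_is_zmod_morphism : zmod_morphism unjoinF.
Proof.
by move=> c d; apply/ffunP => s; rewrite !ffunE; case: ifP; rewrite ?subr0 // mulrBr.
Qed.
HB.instance Definition _ :=
  GRing.isZmodMorphism.Build (chainT V) (chainT V) unjoinF unjoinF_is_zmod_morphism.

Lemma restrF_is_zmod_morphism : zmod_morphism restrF.
Proof. by move=> c d; apply/ffunP => s; rewrite !ffunE; case: ifP; rewrite ?subr0. Qed.
HB.instance Definition _ :=
  GRing.isZmodMorphism.Build (chainT V) (chainT V) restrF restrF_is_zmod_morphism.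

Definition connectF z : chainT V := bdry (joinF z).

Lemma connectF_is_zmod_morphism : zmod_morphism connectF.
Proof. by move=> c d; rewrite /connectF !raddfB. Qed.
HB.instance Definition _ :=
  GRing.isZmodMorphism.Build (chainT V) (chainT V) connectF connectF_is_zmod_morphism.

Lemma shuffle_signK s : shuffle_sign s * shuffle_sign s = 1.
Proof. by rewrite -expr2 sqrr_sign. Qed.

Lemma shuffle_signU1 s v : v \notin s -> v \notin F ->
  shuffle_sign (v |: s) = (-1) ^+ #|[set u in F | vlt u v]| * shuffle_sign s.
Proof.
move=> vs vF; have vFv : [set v] :\: F = [set v] by apply/setDidPl; rewrite disjoints1.
by rewrite /shuffle_sign setDUl vFv big_setU1 ?exprD // !inE negb_and vs orbT.
Qed.

Lemma face_sign_disjU t v : [disjoint t & F] ->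
  face_sign (t :|: F) v = face_sign t v * (-1) ^+ #|[set u in F | vlt u v]|.
Proof.
move=> tF; rewrite /face_sign -exprD.
have -> : [set u in t :|: F | vlt u v] =
          [set u in t | vlt u v] :|: [set u in F | vlt u v].
  by apply/setP => u; rewrite !inE andb_orl.
congr (_ ^+ _); apply/eqP; rewrite (leq_card_setU _ _).2.
rewrite disjoint_subset; apply/subsetP => u; rewrite !inE => /andP[ut _].
by rewrite (disjointFr tF ut).
Qed.

Lemma unjoinF_bdry c : unjoinF (bdry c) = bdry (unjoinF c).
Proof.
apply/ffunP => t; rewrite [RHS]bdryE ffunE.
have vtF v : [disjoint v |: t & F] = (v \notin F) && [disjoint t & F].
  by rewrite -!setI_eq0 setIUl setU_eq0 !setI_eq0 disjoints1.
case: (boolP [disjoint t & F]) => tF; last first.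
  by rewrite big1 // => v _; rewrite ffunE vtF (negbTE tF) andbF mulr0.
rewrite bdryE big_distrr /= [RHS](bigID (mem F)) /=.
rewrite [X in _ = X + _]big1 ?add0r => [|v /andP[_ vF]]; last first.
  by rewrite ffunE vtF vF mulr0.
apply: eq_big => [v|v]; first by rewrite !inE negb_or.
rewrite !inE negb_or => /andP[vt vF].
rewrite ffunE vtF vF tF -setUA shuffle_signU1 ?inE ?negb_or ?vt //.
by rewrite face_sign_disjU //=; ring.
Qed.

Lemma unjoinF_joinF z : (forall t, z t != 0 -> [disjoint t & F]) ->
  unjoinF (joinF z) = z.
Proof.
move=> zF; apply/ffunP => t; rewrite !ffunE subsetUr.
case: (boolP [disjoint t & F]) => tF.
  by rewrite setUKD_disjoint // mulrA shuffle_signK mul1r.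
by case: (eqVneq (z t) 0) => // /zF; rewrite (negbTE tF).
Qed.

Lemma joinF_unjoinF c : joinF (unjoinF c) = c - restrF c.
Proof.
apply/ffunP => s; rewrite !ffunE; case: ifP => Fs; last by rewrite subrr.
by rewrite disjoint_setDl setDUK_subset // mulrA shuffle_signK mul1r subr0.
Qed.

Lemma unjoinF_eq0 c : unjoinF c = 0 <-> forall s, F \subset s -> c s = 0.
Proof.
split=> [/ffunP c0 s Fs | c0]; last first.
  by apply/ffunP => t; rewrite !ffunE c0 ?subsetUr ?mulr0 ?if_same.
move: (c0 (s :\: F)); rewrite !ffunE disjoint_setDl setDUK_subset //.
by move/(congr1 ( *%R (shuffle_sign s))); rewrite mulrA shuffle_signK mul1r mulr0.
Qed.

Lemma joinF_bdry z : (forall t, z t != 0 -> [disjoint t & F]) ->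
  joinF (bdry z) = bdry (joinF z) - restrF (bdry (joinF z)).
Proof. by move=> zF; rewrite -joinF_unjoinF unjoinF_bdry unjoinF_joinF. Qed.

End JoinF.

Section PairSequence.
Variables (F : {set V}) (K L M : {set {set V}}).
Hypothesis L_down : down_closed L.
Hypothesis K_def : forall s, (s \in K) = (s \in L) && ~~ (F \subset s).
Hypothesis M_join : forall t, t \in M -> [disjoint t & F] /\ t :|: F \in L.
Hypothesis L_unjoin : forall s, s \in L -> F \subset s -> s :\: F \in M.
Local Notation k := (#|F|%:Z).
Implicit Types (i j : int) (z : chainT V).

Lemma chainK_chainL i c : is_chain K i c -> is_chain L i c.
Proof. by apply: chain_sub => s; rewrite K_def => /andP[]. Qed.

Lemma chainK_unjoinF i c : is_chain K i c -> unjoinF F c = 0.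
Proof.
move=> hc; apply/unjoinF_eq0 => s Fs; apply/eqP; apply: contraT => /hc[].
by rewrite K_def Fs andbF.
Qed.

Lemma chainL_chainK i c : is_chain L i c -> unjoinF F c = 0 -> is_chain K i c.
Proof.
move=> hc /unjoinF_eq0 c0 s cs; have [sL ->] := hc s cs; split=> //.
by rewrite K_def sL; apply: contra cs => /c0 ->.
Qed.

Lemma restrF_chain i c : is_chain L i c -> is_chain K i (restrF F c).
Proof.
move=> hc s; rewrite ffunE; case: ifP => [_|Fs]; first by rewrite eqxx.
by move=> /hc[sL ->]; rewrite K_def sL Fs.
Qed.

Lemma unjoinF_chain i j c : j = i - k -> is_chain L i c -> is_chain M j (unjoinF F c).
Proof.
move=> -> hc t; rewrite ffunE; case: ifP => tF; last by rewrite eqxx.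
rewrite mulf_eq0 negb_or => /andP[_ /hc[tFL cardtF]]; split.
  by rewrite -(setUKD_disjoint tF); apply: L_unjoin => //; apply: subsetUr.
by move: cardtF; rewrite cardsU_disjoint // PoszD; lia.
Qed.

Lemma joinF_chain i j z : j = i + k -> is_chain M i z -> is_chain L j (joinF F z).
Proof.
move=> -> hz s; rewrite ffunE; case: ifP => Fs; last by rewrite eqxx.
rewrite mulf_eq0 negb_or => /andP[_ /hz[sFM cardsF]].
have [sFF] := M_join sFM; rewrite setDUK_subset // => sL; split=> //.
by move: cardsF; rewrite -{2}(setDUK_subset Fs) cardsU_disjoint // PoszD; lia.
Qed.

Lemma chainM_disjoint i z t : is_chain M i z -> z t != 0 -> [disjoint t & F].
Proof. by move=> hz /hz[/M_join[]]. Qed.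

Lemma chainM_unjoinF_joinF i z : is_chain M i z -> unjoinF F (joinF F z) = z.
Proof. by move=> hz; apply: unjoinF_joinF => t; apply: chainM_disjoint hz. Qed.

Lemma chainM_connectF_bdry i z : is_chain M i z ->
  connectF F (bdry z) = bdry (- restrF F (connectF F z)).
Proof.
move=> hz; rewrite /connectF joinF_bdry; last by move=> t; apply: chainM_disjoint hz.
by rewrite raddfB /= bdryK sub0r raddfN.
Qed.

Lemma connectF_chain i j z : j = i + k - 1 -> is_chain M i z ->
  is_chain L j (connectF F z).
Proof. by move=> -> hz; apply: (bdry_chain (i := i + k)) L_down (joinF_chain _ hz). Qed.

Lemma cycleM_connectF_chain i j z : j = i + k - 1 -> is_cycle M i z ->
  is_chain K j (connectF F z).
Proof.
move=> -> [hz zb]; apply: chainL_chainK; first exact: connectF_chain hz.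
by rewrite unjoinF_bdry (chainM_unjoinF_joinF hz) zb.
Qed.

Lemma connectF_hmap i : hmap M (i - k + 1) K i (connectF F).
Proof.
split.
- exact: raddfB.
- move=> z zc; split; last by rewrite /connectF bdryK.
  by apply: cycleM_connectF_chain zc; lia.
- move=> _ [d [hd ->]]; exists (- restrF F (connectF F d)).
  rewrite (chainM_connectF_bdry hd); split=> //.
  by apply/chainN/restrF_chain/(connectF_chain _ hd); lia.
Qed.

Lemma inclusion_hmap i : hmap K i L i id.
Proof.
split=> // [z [hz zb] | _ [d [hd ->]]]; first by split=> //; apply: chainK_chainL hz.
by exists d; split=> //; apply: chainK_chainL hd.
Qed.

Lemma unjoinF_hmap i : hmap L i M (i - k) (unjoinF F).
Proof.
split.
- exact: raddfB.
- by move=> z [hz zb]; split; [apply: unjoinF_chain hz | rewrite -unjoinF_bdry zb raddf0].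
- move=> _ [d [hd ->]]; exists (unjoinF F d); rewrite unjoinF_bdry; split=> //.
  by apply: unjoinF_chain hd; lia.
Qed.

Lemma exact_at_K i : exact_at M (i - k + 1) (connectF F) K i id L i.
Proof.
move=> z [hz zb]; split=> [[d [hd zd]] | [x [[hx xb] [e [he ee]]]]].
  exists (unjoinF F d); split; first split.
  - by apply: unjoinF_chain hd; lia.
  - by rewrite -unjoinF_bdry -zd (chainK_unjoinF hz).
  exists (- restrF F d); split; first exact/chainN/restrF_chain.
  by rewrite zd /connectF joinF_unjoinF !raddfB /= addrAC subrr sub0r raddfN.
exists (joinF F x - e); split.
  by apply: chainB (chainK_chainL he); apply: joinF_chain hx; lia.
by rewrite raddfB /= -ee opprB addrC subrK.
Qed.

Lemma exact_at_L i : exact_at K i id L i (unjoinF F) M (i - k).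
Proof.
move=> z [hz zb]; split=> [[d [hd zd]] | [x [[hx xb] [e [he ee]]]]].
  exists (z - connectF F d); split; first split.
  - apply: chainL_chainK; first by apply: chainB hz (connectF_chain _ hd); lia.
    by rewrite raddfB /= unjoinF_bdry (chainM_unjoinF_joinF hd) zd subrr.
  - by rewrite raddfB /= zb /connectF bdryK subrr.
  exists (- joinF F d); split; first by apply/chainN/(joinF_chain _ hd); lia.
  by rewrite addrAC subrr sub0r raddfN.
exists (- unjoinF F e); split; first by apply/chainN/(unjoinF_chain _ he); lia.
have -> : z = x - bdry e by rewrite -ee opprB addrC subrK.
by rewrite raddfB /= (chainK_unjoinF hx) sub0r unjoinF_bdry raddfN.
Qed.

Lemma exact_at_M i : exact_at L i (unjoinF F) M (i - k) (connectF F) K (i - 1).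
Proof.
move=> z [hz zb]; split=> [[e [+ ze]] | [x [[hx xb] [d [hd xd]]]]].
  rewrite subrK => he; exists (joinF F z - e); split; first split.
  - by apply: chainB (chainK_chainL he); apply: joinF_chain hz; lia.
  - by rewrite raddfB /= -ze subrr.
  exists 0; split; first exact: chain0.
  by rewrite raddfB /= (chainM_unjoinF_joinF hz) (chainK_unjoinF he) subr0 subrr raddf0.
exists (restrF F (connectF F d - x)); rewrite subrK; split.
  by apply/restrF_chain/chainB => //; apply: connectF_chain hd; lia.
have -> : z = unjoinF F x - bdry d by rewrite -xd opprB addrC subrK.
rewrite raddfB /= (chainM_connectF_bdry hd) /connectF joinF_unjoinF !raddfB /=.
by rewrite xb sub0r raddfN opprK addrC.
Qed.

Lemma pair_long_exact_sequence i :
  [/\ hmap M (i - k + 1) K i (connectF F), hmap K i L i id &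
      hmap L i M (i - k) (unjoinF F)] /\
  [/\ exact_at M (i - k + 1) (connectF F) K i id L i,
      exact_at K i id L i (unjoinF F) M (i - k) &
      exact_at L i (unjoinF F) M (i - k) (connectF F) K (i - 1)].
Proof.
split; split; [exact: connectF_hmap | exact: inclusion_hmap | exact: unjoinF_hmap
  | exact: exact_at_K | exact: exact_at_L | exact: exact_at_M].
Qed.

End PairSequence.

Lemma Ind_down W (C : {set {set V}}) : down_closed (Ind W C).
Proof.
move=> s t; rewrite !inE => /andP[tW /forall_inP tC] st.
rewrite (subset_trans st tW); apply/forall_inP => E /tC.
by apply: contra => /subset_trans; apply.
Qed.

Section IndependenceComplexes.
Variables (C : {set {set V}}) (F : {set V}).

Lemma Ind_hdel : F \in C -> forall s,
  (s \in Ind setT C) = (s \in Ind setT (hdel C F)) && ~~ (F \subset s).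
Proof.
move=> FC s; rewrite !inE subsetT /=.
apply/forall_inP/andP => [sC | [/forall_inP sC FNs] E EC].
  by split; [apply/forall_inP => E /setD1P[_ /sC] | apply: sC].
by case: (eqVneq E F) => [->|EF] //; apply: sC; apply/setD1P.
Qed.

Lemma Ind_hdel_unjoin s : s \in Ind setT (hdel C F) -> F \subset s ->
  s :\: F \in Ind (hcolon_vertices C F) (hcolon C F).
Proof.
rewrite !inE => /andP[_ /forall_inP sC] Fs; apply/andP; split.
  apply/subsetP => x; rewrite !inE => /andP[xF xs]; rewrite negb_or xF /=.
  apply/bigcupP => -[E /andP[EC /cards1P[a EFa]] xEF].
  have Es : E \subset s.
    by rewrite -(subDset_sub _ Fs) EFa sub1set; move: xEF; rewrite EFa => /set1P <-.
  apply: (negP (sC E _)) Es; apply/setD1P; split=> //.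
  by apply: contraTneq xEF => ->; rewrite setDv inE.
apply/forall_inP => _ /setIdP[/imsetP[E EC ->] _].
apply/negP => /subset_trans/(_ (subsetDl s F)); rewrite (subDset_sub _ Fs).
exact/negP/sC.
Qed.

Lemma Ind_hcolon_join t : (forall E, E \in C -> E \subset F -> E = F) ->
  t \in Ind (hcolon_vertices C F) (hcolon C F) ->
  [disjoint t & F] /\ t :|: F \in Ind setT (hdel C F).
Proof.
move=> CF; rewrite inE => /andP[tW /forall_inP tC].
have tFN x : x \in t -> (x \notin F) && (x \notin hnbhd C F).
  by move/(subsetP tW); rewrite !inE negb_or.
have tF : [disjoint t & F].
  by rewrite disjoint_subset; apply/subsetP => x /tFN /andP[xF _]; rewrite inE.
split=> //; rewrite inE subsetT /=; apply/forall_inP => E EC; apply/negP => EtF.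
pose Fam := [set E0 :\: F | E0 in hdel C F].
(* a minimal member of Fam below E :\: F is either empty, a neighbour of F,
   or an edge of C : F, and none of these fits inside t *)
have [_ /minsetP[/imsetP[D DC ->] Dmin] DE] :=
  minset_exists (P := mem Fam) (imset_f (fun E0 => E0 :\: F) EC).
have Dt : D :\: F \subset t.
  by apply: subset_trans DE _; rewrite subDset setUC.
have /setD1P[DF DC'] := DC.
case: (ltngtP #|D :\: F| 1) => [|DF2|/eqP/cards1P[x Dx]].
- rewrite ltnS leqn0 cards_eq0 setD_eq0 => /CF /= DsubF; apply/negP: DF.
  by rewrite DsubF ?eqxx.
- suff : D :\: F \in hcolon C F by move/tC; rewrite Dt.
  rewrite /hcolon inE (imset_f _ DC) DF2 /=.
  apply/forall_inP => _ /imsetP[D' D'C ->]; apply/implyP => D'D.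
  by rewrite (Dmin _ (imset_f _ D'C) D'D).
- have xt : x \in t by apply: (subsetP Dt); rewrite Dx set11.
  move/andP: (tFN x xt) => [_]; apply/negP/negPn/bigcupP; exists D.
    by rewrite DC' Dx cards1.
  by rewrite Dx set11.
Qed.

End IndependenceComplexes.

End Chains.

Theorem theorem3p1 (V : finType) (C : {set {set V}}) (F : {set V}) :
  is_hypergraph C -> F \in C ->
  let IC := Ind [set: V] C in
  let ICF := Ind [set: V] (hdel C F) in
  let ICol := Ind (hcolon_vertices C F) (hcolon C F) in
  let k := (#|F|)%:Z in
  exists alpha beta gamma : int -> chainT V -> chainT V,
    forall i : int,
      [/\ hmap ICol (i - k + 1) IC i (alpha i),
          hmap IC i ICF i (beta i) &
          hmap ICF i ICol (i - k) (gamma i)] /\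
      [/\ exact_at ICol (i - k + 1) (alpha i) IC i (beta i) ICF i,
          exact_at IC i (beta i) ICF i (gamma i) ICol (i - k) &
          exact_at ICF i (gamma i) ICol (i - k) (alpha (i - 1)) IC (i - 1)].
Proof.
(* only the incomparability of the edges is needed *)
move=> [_ C_antichain] FC IC ICF ICol k.
exists (fun=> connectF F), (fun=> id), (fun=> unjoinF F) => i.
apply: pair_long_exact_sequence.
- exact: Ind_down.
- exact: Ind_hdel.
- by move=> t; apply: Ind_hcolon_join => E EC; apply: C_antichain.
- exact: Ind_hdel_unjoin.
Qed.
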